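(* For integers $j,k,l>1$ let $G_{j,k,l}$ be the group with presentation $\langle x,y,z \mid x^j=e,\ y^k=e,\ xy=z^l\rangle$. Then $G_{j,k,l}/\langle\langle \mathrm{Tor}(G_{j,k,l})\rangle\rangle \cong C_l$ (cyclic of order $l$), and $\mathrm{TorLen}(G_{j,k,l})=2$.
   Context: For a group $G$, $\mathrm{Tor}(G)$ is the set of elements of finite order and $\langle\langle S\rangle\rangle$ denotes the normal closure of $S$. Define $\mathrm{Tor}_0(G)=\{e\}$ and inductively $\mathrm{Tor}_{i+1}(G)$ to be the normal closure in $G$ of $\{g\in G : g\,\mathrm{Tor}_i(G)\text{ has finite order in } G/\mathrm{Tor}_i(G)\}$; set $\mathrm{Tor}_\infty(G)=\bigcup_{i}\mathrm{Tor}_i(G)$. The torsion length $\mathrm{TorLen}(G)$ is the smallest $n\ge 0$ with $\mathrm{Tor}_n(G)=\mathrm{Tor}_\infty(G)$, and $\infty$ if no such $n$ exists. *)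

From HB Require Import structures.
From mathcomp Require Import all_boot all_algebra.
Set Implicit Arguments. Unset Strict Implicit. Unset Printing Implicit Defensive.

Record AbsGroup := {
  carrier :> Type;
  gmul : carrier -> carrier -> carrier;
  gone : carrier;
  ginv : carrier -> carrier;
  gmulA : forall a b c, gmul a (gmul b c) = gmul (gmul a b) c;
  gmul1l : forall a, gmul gone a = a;
  gmul1r : forall a, gmul a gone = a;
  gmulVl : forall a, gmul (ginv a) a = gone;
  gmulVr : forall a, gmul a (ginv a) = gone }.

Arguments gmul {_}. Arguments gone {_}. Arguments ginv {_}.

Fixpoint gpow (G : AbsGroup) (g : G) (n : nat) : G :=
  match n with O => gone | S m => gmul g (gpow g m) end.

Definition is_hom (G H : AbsGroup) (f : G -> H) : Prop :=
  forall a b, f (gmul a b) = gmul (f a) (f b).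

Definition generated3 (G : AbsGroup) (x y z : G) (g : G) : Prop :=
  forall P : G -> Prop,
    P gone -> (forall a b, P a -> P b -> P (gmul a b)) -> (forall a, P a -> P (ginv a)) ->
    P x -> P y -> P z -> P g.

(* G together with x,y,z is a presentation of <x,y,z | x^j, y^k, xy = z^l>:
   the relations hold, x,y,z generate G, and G has the universal property
   (any triple in any group satisfying the relations is the image of (x,y,z)
   under a homomorphism). *)
Definition is_presentation (G : AbsGroup) (x y z : G) (j k l : nat) : Prop :=
  [/\ gpow x j = gone, gpow y k = gone, gmul x y = gpow z l,
      (forall g, generated3 x y z g) &
      (forall (H : AbsGroup) (a b c : H),
          gpow a j = gone -> gpow b k = gone -> gmul a b = gpow c l ->
          exists f : G -> H, [/\ is_hom f, f x = a, f y = b & f z = c])].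

Definition normal_subgroup (G : AbsGroup) (N : G -> Prop) : Prop :=
  [/\ N gone, (forall a b, N a -> N b -> N (gmul a b)), (forall a, N a -> N (ginv a)) &
      (forall g n, N n -> N (gmul (ginv g) (gmul n g)))].

Definition normal_closure (G : AbsGroup) (S : G -> Prop) (g : G) : Prop :=
  forall N : G -> Prop, normal_subgroup N -> (forall s, S s -> N s) -> N g.

(* Tor_i(G); "g Tor_i has finite order in G/Tor_i" is written as
   "g^n \in Tor_i for some n >= 1". *)
Fixpoint Tor (G : AbsGroup) (i : nat) : G -> Prop :=
  match i with
  | O => fun g => g = gone
  | S i' => normal_closure (fun g => exists n, (0 < n)%N /\ Tor i' (gpow g n))
  end.

Definition Tor_inf (G : AbsGroup) (g : G) : Prop := exists i, Tor i g.

Definition TorLen_eq (G : AbsGroup) (n : nat) : Prop :=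
  (forall g : G, Tor n g <-> Tor_inf g) /\
  (forall m, (m < n)%N -> ~ (forall g : G, Tor m g <-> Tor_inf g)).

From HB Require Import structures.
From mathcomp Require Import all_boot all_order all_algebra zify ring.
From Stdlib Require Import ProofIrrelevance FunctionalExtensionality.
From Stdlib Require Import PropExtensionality ClassicalEpsilon.
Set Implicit Arguments.
Unset Strict Implicit.
Unset Printing Implicit Defensive.
Import Order.TTheory GRing.Theory Num.Theory.
Local Open Scope ring_scope.

(* [Tor_1(G) <= ker f] means that [f] kills every torsion element.  This comes
   from a test group [H = A *_Z Z], where [A] is generated by two rotations
   [a], [b] of [Z] of orders [j], [k] with [a b] of infinite order, and [<a b>]
   is amalgamated with [lZ <= Z]; with [c = 1], [a^j = b^k = 1] and
   [a b = c^l].  [H] is built by van der Waerden's normal-form method, and its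
   character trivial on [A] and reducing [Z] mod [l] kills torsion, because
   torsion elements are conjugate into a factor (powers of cyclically reduced
   words grow).  Conversely [z^l = x y] lies in [Tor_1(G)], so every [g] is
   congruent to [z^(f g)] modulo [Tor_1(G)]; hence [ker f = Tor_1(G)],
   [Tor_2(G) = G], and [z] not in [Tor_1(G)] gives [TorLen(G) = 2]. *)

Section GroupFacts.
Variable G : AbsGroup.
Implicit Types a b c g : G.

Lemma gKl a b : gmul (ginv a) (gmul a b) = b.
Proof. by rewrite gmulA gmulVl gmul1l. Qed.

Lemma gKr a b : gmul a (gmul (ginv a) b) = b.
Proof. by rewrite gmulA gmulVr gmul1l. Qed.

Lemma gKVl a b : gmul (gmul b a) (ginv a) = b.
Proof. by rewrite -gmulA gmulVr gmul1r. Qed.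

Lemma gKVr a b : gmul (gmul b (ginv a)) a = b.
Proof. by rewrite -gmulA gmulVl gmul1r. Qed.

Lemma gmul_cancl a b c : gmul a b = gmul a c -> b = c.
Proof. by move=> e; rewrite -(gKl a b) e gKl. Qed.

Lemma gmul_cancr a b c : gmul b a = gmul c a -> b = c.
Proof. by move=> e; rewrite -(gKVl a b) e gKVl. Qed.

Lemma ginv_uniq a b : gmul a b = gone -> b = ginv a.
Proof. by move=> e; rewrite -(gKl a b) e gmul1r. Qed.

Lemma ginvK a : ginv (ginv a) = a.
Proof. by symmetry; apply: ginv_uniq; apply: gmulVl. Qed.

Lemma ginv1 : ginv (gone : G) = gone.
Proof. by symmetry; apply: ginv_uniq; apply: gmul1l. Qed.

Lemma ginvM a b : ginv (gmul a b) = gmul (ginv b) (ginv a).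
Proof.
by symmetry; apply: ginv_uniq; rewrite -gmulA (gmulA b) gmulVr gmul1l gmulVr.
Qed.

Lemma gpowD g m n : gpow g (m + n) = gmul (gpow g m) (gpow g n).
Proof. by elim: m => [|m IH] /=; rewrite ?gmul1l // IH gmulA. Qed.

Lemma gpowM g m n : gpow g (m * n) = gpow (gpow g m) n.
Proof. by elim: n => [|n IH] /=; rewrite ?muln0 // mulnS gpowD IH. Qed.

Lemma gpowSr g n : gpow g n.+1 = gmul (gpow g n) g.
Proof. by rewrite -addn1 gpowD /= gmul1r. Qed.

Lemma gpow_conj g c n :
  gpow (gmul c (gmul g (ginv c))) n = gmul c (gmul (gpow g n) (ginv c)).
Proof.
elim: n => [|n IH] /=; first by rewrite gmul1l gmulVr.
by rewrite IH !gmulA gKVr.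
Qed.
End GroupFacts.

Section HomFacts.
Variables (G H : AbsGroup) (f : G -> H).
Hypothesis f_hom : is_hom f.

Lemma hom1 : f gone = gone.
Proof. by apply: (@gmul_cancl _ (f gone)); rewrite -f_hom !gmul1r. Qed.

Lemma homX a n : f (gpow a n) = gpow (f a) n.
Proof. by elim: n => [|n IH] /=; rewrite ?hom1 // f_hom IH. Qed.
End HomFacts.

Section IntPowers.
Variable G : AbsGroup.

Definition zpow (g : G) (m : int) : G :=
  match m with Posz n => gpow g n | Negz n => ginv (gpow g n.+1) end.

Lemma zpowS (g : G) m : zpow g (m + 1) = gmul g (zpow g m).
Proof.
case: m => [n|[|n]].
- by rewrite -[1]/(Posz 1) -PoszD addn1.
- by rewrite /= gmul1r gmulVr.
- have -> : Negz n.+1 + 1 = Negz n by rewrite !NegzE; lia.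
  by rewrite /zpow [gpow g n.+2]gpowSr ginvM gKr.
Qed.

Lemma zpowD (g : G) m n : zpow g (m + n) = gmul (zpow g m) (zpow g n).
Proof.
have zpowB1 m' : zpow g (m' - 1) = gmul (ginv g) (zpow g m').
  by rewrite -[in RHS](subrK 1 m') zpowS gKl.
elim/int_rec: m => [|m IH|m IH]; first by rewrite add0r gmul1l.
  by rewrite -addn1 PoszD -addrAC !zpowS IH gmulA.
by rewrite -addn1 PoszD opprD -addrAC !zpowB1 IH gmulA.
Qed.
End IntPowers.

Section NormalClosure.
Variable G : AbsGroup.
Implicit Type S : G -> Prop.

Lemma normal_closure_normal S : normal_subgroup (normal_closure S).
Proof.
split=> [N [] //|a b ha hb N hN hS|a ha N hN hS|g n hn N hN hS];
  case: (hN) => _ hM hV hJ; [exact: hM (ha N hN hS) (hb N hN hS)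
  | exact: hV (ha N hN hS) | exact: hJ (hn N hN hS)].
Qed.

Lemma normal_closure_sub S s : S s -> normal_closure S s.
Proof. by move=> hs N _ hS; apply: hS. Qed.

Lemma normal_subgroupX (N : G -> Prop) a n :
  normal_subgroup N -> N a -> N (gpow a n).
Proof. by case=> h1 hM _ _ ha; elim: n => [|n IH] //=; apply: hM. Qed.

Lemma Tor1_normal : normal_subgroup (@Tor G 1).
Proof. exact: normal_closure_normal. Qed.

Lemma Tor1_torsion (g : G) n : (0 < n)%N -> gpow g n = gone -> Tor 1 g.
Proof. by move=> n0 hg; apply: normal_closure_sub; exists n. Qed.
End NormalClosure.

Section NormalCongruence.
Variables (G : AbsGroup) (N : G -> Prop).
Hypothesis N_normal : normal_subgroup N.
Implicit Types a b c : G.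

Definition congr_mod a b : Prop := N (gmul a (ginv b)).

Lemma congr_mod_refl a : congr_mod a a.
Proof. by rewrite /congr_mod gmulVr; case: N_normal. Qed.

Lemma congr_mod_trans a b c : congr_mod a b -> congr_mod b c -> congr_mod a c.
Proof.
case: N_normal => _ hM _ _ hab hbc.
by have := hM _ _ hab hbc; rewrite -gmulA gKl.
Qed.

Lemma congr_modM a a' b b' :
  congr_mod a a' -> congr_mod b b' -> congr_mod (gmul a b) (gmul a' b').
Proof.
case: N_normal => _ hM _ hJ ha hb; rewrite /congr_mod.
have -> : gmul (gmul a b) (ginv (gmul a' b')) = gmul (gmul a (ginv a'))
    (gmul (ginv (ginv a')) (gmul (gmul b (ginv b')) (ginv a'))).
  by rewrite ginvK ginvM !gmulA gKVr.
exact: hM ha (hJ _ _ hb).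
Qed.

Lemma congr_modV a b : congr_mod a b -> congr_mod (ginv a) (ginv b).
Proof.
case: N_normal => _ _ hV hJ hab; rewrite /congr_mod ginvK.
by have := hJ a _ (hV _ hab); rewrite ginvM ginvK !gmulA gKVr.
Qed.

Lemma congr_mod1 a : congr_mod a gone <-> N a.
Proof. by rewrite /congr_mod ginv1 gmul1r. Qed.
End NormalCongruence.

Section Characters.
Variables (G : AbsGroup) (V : zmodType) (f : G -> V).
Hypothesis fM : forall a b, f (gmul a b) = f a + f b.

Lemma f1 : f gone = 0.
Proof. by apply: (@addrI _ (f gone)); rewrite -fM gmul1l addr0. Qed.

Lemma fV a : f (ginv a) = - f a.
Proof. by apply/eqP; rewrite -addr_eq0 -fM gmulVl f1. Qed.

Lemma fX a n : f (gpow a n) = f a *+ n.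
Proof. by elim: n => [|n IH] /=; rewrite ?f1 // fM IH mulrS. Qed.

Hypothesis f_torsion : forall g n, (0 < n)%N -> gpow g n = gone -> f g = 0.

Lemma Tor1_ker (g : G) : Tor 1 g -> f g = 0.
Proof.
move=> hg; apply: (hg (fun g => f g = 0)); last first.
  by move=> s [n [n0 hs]]; apply: f_torsion hs.
split=> [|a b ha hb|a ha|c a ha]; rewrite ?f1 // ?fM ?fV ?ha ?hb.
- by rewrite addr0.
- by rewrite oppr0.
- by rewrite add0r addNr.
Qed.
End Characters.

(* A group [A] together with an embedded infinite cyclic subgroup
   [zf_emb : int -> A] and a right transversal [zf_tr] of it: every element
   decomposes uniquely as [zf_emb m * zf_val t]. *)
Record zfactor := ZFactor {
  zf_group :> AbsGroup;
  zf_emb : int -> zf_group;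
  zf_embD : forall m n, zf_emb (m + n) = gmul (zf_emb m) (zf_emb n);
  zf_tr : Type;
  zf_tr1 : zf_tr;
  zf_val : zf_tr -> zf_group;
  zf_val1 : zf_val zf_tr1 = gone;
  zf_dec : zf_group -> int * zf_tr;
  zf_decK : forall g, g = gmul (zf_emb (zf_dec g).1) (zf_val (zf_dec g).2);
  zf_dec_emb : forall m g,
    zf_dec (gmul (zf_emb m) g) = (m + (zf_dec g).1, (zf_dec g).2);
  zf_dec_val : forall t, zf_dec (zf_val t) = (0, t) }.

Arguments zf_emb {_}. Arguments zf_embD {_}. Arguments zf_tr1 {_}.
Arguments zf_val {_}. Arguments zf_val1 {_}. Arguments zf_dec {_}.
Arguments zf_decK {_}. Arguments zf_dec_emb {_}. Arguments zf_dec_val {_}.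

Section ZFactorFacts.
Variable A : zfactor.

Lemma zf_emb0 : zf_emb 0 = gone :> A.
Proof. by apply: (@gmul_cancl _ (zf_emb 0)); rewrite -zf_embD addr0 gmul1r. Qed.

Lemma zf_dec_emb0 m : zf_dec (zf_emb m : A) = (m, zf_tr1).
Proof.
rewrite -[zf_emb m]gmul1r -zf_val1 zf_dec_emb zf_dec_val.
by rewrite addr0.
Qed.
End ZFactorFacts.

Definition is_tr1 {T : Type} (t1 t : T) : bool :=
  if excluded_middle_informative (t = t1) then true else false.

Lemma is_tr1P {T : Type} (t1 t : T) : reflect (t = t1) (is_tr1 t1 t).
Proof. by rewrite /is_tr1; case: excluded_middle_informative; constructor. Qed.

(* The amalgamated free product of two zfactors [F true] and [F false] over
   their common infinite cyclic subgroup, built by van der Waerden's method: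
   its elements are reduced words [(m, [t1; ...; tn])], standing for
   [emb m * t1 * ... * tn] with nontrivial transversal elements [ti]
   alternately from the two factors, and each factor acts on reduced words by
   left multiplication. *)
Section Amalgam.
Variable F : bool -> zfactor.

Inductive syllable := Syl (s : bool) of zf_tr (F s).
Arguments Syl : clear implicits.

Definition side (u : syllable) : bool := let: Syl s _ := u in s.

Definition nontrivial (u : syllable) : Prop :=
  let: Syl s t := u in t <> zf_tr1.

Definition starts_off (s : bool) (L : seq syllable) : Prop :=
  if L is u :: _ then side u <> s else True.

Fixpoint reduced (L : seq syllable) : Prop :=
  if L is u :: L' then [/\ nontrivial u, starts_off (side u) L' & reduced L']
  else True.

Definition word := (int * seq syllable)%type.

Definition shift (n : int) (w : word) : word := (n + w.1, w.2).

Definition proj (s : bool) (u : syllable) : option (zf_tr (F s)) :=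
  match u with
  | Syl true t => if s as b return option (zf_tr (F b)) then Some t else None
  | Syl false t => if s as b return option (zf_tr (F b)) then None else Some t
  end.

Lemma proj_syl s t : proj s (Syl s t) = Some t.
Proof. by case: s t. Qed.

Lemma proj_some s u t : proj s u = Some t -> u = Syl s t.
Proof. by case: u => -[] u; case: s t => //= t [->]. Qed.

Lemma proj_offside s u : side u <> s -> proj s u = None.
Proof. by case: u => -[] u; case: s. Qed.

Lemma offside_of_proj s u : proj s u = None -> side u <> s.
Proof. by case: u => -[] u; case: s. Qed.

Section SideAction.
Variable s : bool.
Local Notation A := (F s).

Definition head (w : word) : A * seq syllable :=
  if w.2 is u :: L then
    if proj s u is Some t then (gmul (zf_emb w.1) (zf_val t), L)
    else (zf_emb w.1, w.2)
  else (zf_emb w.1, [::]).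

Definition push (p : int * zf_tr A) (L : seq syllable) : word :=
  (p.1, if is_tr1 zf_tr1 p.2 then L else Syl s p.2 :: L).

Definition act (y : A) (w : word) : word :=
  push (zf_dec (gmul y (head w).1)) (head w).2.

Lemma head_reduced w :
  reduced w.2 -> starts_off s (head w).2 /\ reduced (head w).2.
Proof.
case: w => m [|u L] //= hL; rewrite /head /=.
case e: (proj s u) => [t|] /=; last by split=> //; apply: offside_of_proj.
by move: hL; rewrite (proj_some e) => -[].
Qed.

Lemma push_reduced p L : reduced L -> starts_off s L -> reduced (push p L).2.
Proof. by rewrite /push /=; case: is_tr1P. Qed.

Lemma head_push d L : starts_off s L -> head (push (zf_dec d) L) = (d, L).
Proof.
rewrite /push /head /=; case: is_tr1P => [e|_] hL; last first.
  by rewrite proj_syl -zf_decK.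
have hd := zf_decK d; rewrite e zf_val1 gmul1r in hd.
by case: L hL => [|u L] /= hL; rewrite ?proj_offside // -hd.
Qed.

Lemma push_head w : reduced w.2 -> push (zf_dec (head w).1) (head w).2 = w.
Proof.
case: w => m [|u L] /= hL; rewrite /head /= /push.
  by rewrite zf_dec_emb0 /=; case: is_tr1P.
case e: (proj s u) => [t|] /=; last by rewrite zf_dec_emb0; case: is_tr1P.
move: hL; rewrite (proj_some e) => -[/= t1 _ _].
by rewrite zf_dec_emb zf_dec_val addr0 /=; case: is_tr1P.
Qed.

Lemma act_reduced y w : reduced w.2 -> reduced (act y w).2.
Proof. by move=> /head_reduced [h1 h2]; apply: push_reduced. Qed.

Lemma act_mul y1 y2 w :
  reduced w.2 -> act y1 (act y2 w) = act (gmul y1 y2) w.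
Proof.
move=> /head_reduced [h1 _].
by rewrite /act [head (push _ _)]head_push //= gmulA.
Qed.

Lemma act1 w : reduced w.2 -> act gone w = w.
Proof. by move=> hw; rewrite /act gmul1l push_head. Qed.

Lemma act_emb n w : reduced w.2 -> act (zf_emb n) w = shift n w.
Proof.
move=> hw; rewrite /act zf_dec_emb -[in RHS](push_head hw).
by rewrite /push /shift.
Qed.

Lemma act_size y w : (size (act y w).2 <= (size w.2).+1)%N.
Proof.
rewrite /act /push /head; case: w => m [|u L] /=; first by case: is_tr1P.
by case: (proj s u) => [t|] /=; case: is_tr1P => //= _; lia.
Qed.

Lemma act_prepend t w : starts_off s w.2 -> t <> zf_tr1 ->
  exists m' r, act (zf_val t) w = (m', Syl s r :: w.2).
Proof.
case: w => m L /= hL nt; rewrite /act.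
have -> : head (m, L) = (zf_emb m, L).
  by rewrite /head /=; case: L hL => [|u L] //= /proj_offside ->.
rewrite /push /=; case: is_tr1P => [e|_]; last by eauto.
have hd := zf_decK (gmul (zf_val t) (zf_emb m)); rewrite e zf_val1 gmul1r in hd.
have : zf_val t = zf_emb ((zf_dec (gmul (zf_val t) (zf_emb m))).1 - m).
  by rewrite zf_embD -hd -gmulA -zf_embD subrr zf_emb0 gmul1r.
by move=> /(f_equal zf_dec); rewrite zf_dec_val zf_dec_emb0 => -[].
Qed.

Lemma act_cons t L :
  reduced (Syl s t :: L) -> act (zf_val t) (0, L) = (0, Syl s t :: L).
Proof.
move=> [/= nt hL _]; rewrite /act.
have -> : head (0, L) = (zf_emb 0, L).
  by rewrite /head /=; case: L hL => [|u L] //= /proj_offside ->.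
rewrite zf_emb0 gmul1r zf_dec_val /push /=.
by case: is_tr1P.
Qed.
End SideAction.

Fixpoint ev_list (L : seq syllable) (w : word) : word :=
  if L is Syl s t :: L' then act (zf_val t) (ev_list L' w) else w.

Definition ev (u w : word) : word := shift u.1 (ev_list u.2 w).

Lemma ev_list_reduced L w : reduced w.2 -> reduced (ev_list L w).2.
Proof. by elim: L => [|[s t] L IH] //= hw; apply/act_reduced/IH. Qed.

Lemma ev_reduced u w : reduced w.2 -> reduced (ev u w).2.
Proof. exact: ev_list_reduced. Qed.

Lemma ev_head s u v : reduced v.2 ->
  ev u v = act (head s u).1 (ev_list (head s u).2 v).
Proof.
case: u => m [|u L] /= hv; rewrite /ev /head /=; first by rewrite act_emb.
have hL := ev_list_reduced L hv.
case e: (proj s u) => [t|] /=.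
  by rewrite (proj_some e) /= -act_mul // act_emb //; apply: act_reduced.
by rewrite act_emb //; apply: (ev_list_reduced (u :: L)).
Qed.

Lemma ev_act s (y : F s) u v : reduced u.2 -> reduced v.2 ->
  ev (act y u) v = act y (ev u v).
Proof.
move=> hu hv; have [hn _] := head_reduced s hu.
rewrite (ev_head s u hv) (ev_head s (act y u) hv).
have -> : head s (act y u) = (gmul y (head s u).1, (head s u).2).
  exact: head_push.
rewrite /= -act_mul //.
exact: ev_list_reduced.
Qed.

Lemma ev_ev_list L v w : reduced v.2 -> reduced w.2 ->
  ev (ev_list L v) w = ev_list L (ev v w).
Proof.
move=> hv hw; elim: L => [|[s t] L IH] //=.
by rewrite ev_act ?IH //; apply: ev_list_reduced.
Qed.

Lemma ev_shift n x w : ev (shift n x) w = shift n (ev x w).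
Proof. by rewrite /ev /shift /= addrA. Qed.

Lemma evA u v w : reduced v.2 -> reduced w.2 -> ev (ev u v) w = ev u (ev v w).
Proof.
move=> hv hw; rewrite -[ev u v]/(shift u.1 (ev_list u.2 v)).
by rewrite ev_shift ev_ev_list.
Qed.

Definition one : word := (0, [::]).

Lemma ev_one_l w : ev one w = w.
Proof. by case: w => m L; rewrite /ev /shift /= add0r. Qed.

Lemma ev_list_cat L L' : reduced (L ++ L') -> ev_list L (0, L') = (0, L ++ L').
Proof.
elim: L => [|[s t] L IH] //= hL.
by rewrite IH ?act_cons //; case: hL.
Qed.

Lemma ev_one_r w : reduced w.2 -> ev w one = w.
Proof.
by case: w => m L hL; rewrite /ev /= ev_list_cat ?cats0 // /shift /= addr0.
Qed.

Fixpoint ev_list_inv (L : seq syllable) (w : word) : word :=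
  if L is Syl s t :: L' then ev_list_inv L' (act (ginv (zf_val t)) w) else w.

Definition ev_inv (u w : word) : word := ev_list_inv u.2 (shift (- u.1) w).

Lemma ev_list_inv_reduced L w : reduced w.2 -> reduced (ev_list_inv L w).2.
Proof. by elim: L w => [|[s t] L IH] //= w hw; apply/IH/act_reduced. Qed.

Lemma ev_list_invK L w : reduced w.2 -> ev_list_inv L (ev_list L w) = w.
Proof.
elim: L w => [|[s t] L IH] //= w hw.
by rewrite act_mul ?gmulVl ?act1 ?IH //; apply: ev_list_reduced.
Qed.

Lemma ev_listK L w : reduced w.2 -> ev_list L (ev_list_inv L w) = w.
Proof.
elim: L w => [|[s t] L IH] //= w hw.
by rewrite IH ?act_mul ?gmulVr ?act1 //; apply: act_reduced.
Qed.

Lemma ev_ev_inv u v w : reduced v.2 -> reduced w.2 ->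
  ev (ev_inv u v) w = ev_inv u (ev v w).
Proof.
move=> hv hw; rewrite /ev_inv -ev_shift.
have : reduced (shift (- u.1) v).2 := hv.
elim: u.2 (shift (- u.1) v) => [|[s t] L IH] x hx //=.
by rewrite IH ?ev_act //; apply: act_reduced.
Qed.

Definition amalgam_elt := {w : word | reduced w.2}.

Lemma amalgam_eq (a b : amalgam_elt) : sval a = sval b -> a = b.
Proof.
by case: a b => a ha [b hb] /= e; subst b; congr exist; apply: proof_irrelevance.
Qed.

Definition amul (a b : amalgam_elt) : amalgam_elt :=
  exist _ (ev (sval a) (sval b)) (ev_reduced (sval a) (proj2_sig b)).
Definition aone : amalgam_elt := exist _ one I.
Definition ainv (a : amalgam_elt) : amalgam_elt :=
  exist _ (ev_inv (sval a) one)
    (ev_list_inv_reduced _ (I : reduced (shift (- (sval a).1) one).2)).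

Lemma amulA a b c : amul a (amul b c) = amul (amul a b) c.
Proof.
by case: a b c => [u hu] [v hv] [w hw]; apply: amalgam_eq; rewrite /= evA.
Qed.

Lemma amul1l a : amul aone a = a.
Proof. by apply: amalgam_eq; apply: ev_one_l. Qed.

Lemma amul1r a : amul a aone = a.
Proof. by case: a => w hw; apply: amalgam_eq; apply: ev_one_r. Qed.

Lemma amulVl a : amul (ainv a) a = aone.
Proof.
apply: amalgam_eq => /=; case: a => w hw /=.
rewrite ev_ev_inv // ev_one_l /ev_inv /shift /=.
have -> : (- w.1 + w.1, w.2) = ev_list w.2 one.
  by rewrite addNr ev_list_cat ?cats0.
exact: ev_list_invK.
Qed.

Lemma amulVr a : amul a (ainv a) = aone.
Proof.
apply: amalgam_eq => /=; rewrite /ev /ev_inv ev_listK // /shift /=.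
by rewrite addr0 subrr.
Qed.

Definition amalgam : AbsGroup :=
  Build_AbsGroup amulA amul1l amul1r amulVl amulVr.

Definition inj s (y : F s) : amalgam :=
  exist _ (act y one) (act_reduced y (I : reduced one.2)).

Lemma inj_mulw s (y : F s) (g : amalgam) :
  sval (gmul (inj y) g) = act y (sval g).
Proof. by case: g => w hw; rewrite /= ev_act // ev_one_l. Qed.

Lemma inj_hom s : is_hom (@inj s).
Proof. by move=> a b; apply: amalgam_eq; rewrite inj_mulw /= act_mul. Qed.

Lemma inj_emb s m : sval (inj (zf_emb m : F s)) = (m, [::]).
Proof. by rewrite /= act_emb // /shift /= addr0. Qed.

(* Words whose first and last syllables lie in different factors
   ("cyclically reduced" words of length at least two) have powers of
   strictly growing length. *)
Definition first_side (L : seq syllable) : option bool :=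
  if L is u :: _ then Some (side u) else None.

Lemma starts_off_first s L : first_side L <> Some s -> starts_off s L.
Proof. by case: L => [|u L] //= h e; apply: h; rewrite e. Qed.

Lemma ev_list_grow u L w : reduced (u :: L) ->
  first_side w.2 <> Some (side (last u L)) ->
  size (ev_list (u :: L) w).2 = ((size L).+1 + size w.2)%N /\
  first_side (ev_list (u :: L) w).2 = Some (side u).
Proof.
elim: L u => [|u' L IH] [s t] [nt hoff hL] hw.
  change (ev_list [:: Syl s t] w) with (act (zf_val t) w).
  by have [m' [r ->]] := act_prepend (starts_off_first hw) nt.
have [IH1 IH2] := IH u' hL hw.
have hn : starts_off s (ev_list (u' :: L) w).2.
  by apply: starts_off_first; rewrite IH2 => -[].
have [m' [r e]] := act_prepend hn nt.
change (act (zf_val t) (ev_list (u' :: L) w))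
  with (ev_list (Syl s t :: u' :: L) w) in e.
by rewrite e [size _]/= IH1.
Qed.

Lemma pow_grow (g : amalgam) m u L : sval g = (m, u :: L) ->
  side u <> side (last u L) -> forall k,
  size (sval (gpow g k.+1)).2 = (k.+1 * (size L).+1)%N /\
  first_side (sval (gpow g k.+1)).2 = Some (side u).
Proof.
move=> eg hne; have hL : reduced (u :: L) by have := proj2_sig g; rewrite eg.
elim=> [|k [IH1 IH2]].
  by rewrite -[gpow g 1]/(gmul g gone) gmul1r eg /= mul1n.
have hf : first_side (sval (gpow g k.+1)).2 <> Some (side (last u L)).
  by rewrite IH2 => -[].
have [h1 h2] := ev_list_grow hL hf.
rewrite -[sval (gpow g k.+2)]/(ev (sval g) (sval (gpow g k.+1))) eg.
change (size (shift m (ev_list (u :: L) (sval (gpow g k.+1)))).2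
  = (k.+2 * (size L).+1)%N /\
  first_side (shift m (ev_list (u :: L) (sval (gpow g k.+1)))).2 = Some (side u)).
by rewrite /shift /= h1 IH1 h2 mulSn.
Qed.

Lemma cyclically_reduced_aperiodic (g : amalgam) m u L n :
  sval g = (m, u :: L) -> side u <> side (last u L) -> (0 < n)%N ->
  gpow g n <> gone.
Proof.
move=> eg hne n0 hg; have [h1 _] := pow_grow eg hne n.-1.
by move: h1; rewrite prednK // hg /= => /esym /eqP; rewrite muln_eq0; lia.
Qed.

Lemma reduced_catl L L' : reduced (L ++ L') -> reduced L.
Proof.
elim: L => [|u L IH] //= [h1 h2 h3]; split=> //; last exact: IH.
by case: L h2 {IH h3}.
Qed.

Lemma reduced_catr L L' : reduced (L ++ L') -> reduced L'.
Proof. by elim: L => [|u L IH] //= [_ _ /IH]. Qed.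

Lemma conj_shorten (g : amalgam) m s a b L :
  sval g = (m, Syl s a :: L ++ [:: Syl s b]) ->
  exists c : amalgam,
    (size (sval (gmul c (gmul g (ginv c)))).2 < size (sval g).2)%N.
Proof.
move=> eg; have hg : reduced (Syl s a :: L ++ [:: Syl s b]).
  by have := proj2_sig g; rewrite eg.
have [_ _ hLb] := hg; have hL := reduced_catl hLb; have hb := reduced_catr hLb.
pose mid : amalgam := exist _ (0, L) hL.
have mid_b : sval (gmul mid (inj (zf_val b))) = (0, L ++ [:: Syl s b]).
  rewrite -[sval _]/(shift 0 (ev_list L (act (zf_val b) one))) (act_cons hb).
  by rewrite ev_list_cat // /shift /= addr0.
have eg' : g = gmul (inj (zf_emb m : F s))
    (gmul (inj (zf_val a)) (gmul mid (inj (zf_val b)))).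
  apply: amalgam_eq; rewrite !inj_mulw mid_b eg act_cons // act_emb //.
  by rewrite /shift /= addr0.
exists (inj (zf_val b)).
rewrite {1}eg' !gmulA gKVl -!inj_hom inj_mulw /= eg /= size_cat /= addn1.
exact: leq_ltn_trans (act_size _ _) _.
Qed.

Section AmalgamCharacter.
Variable V : zmodType.
Variable chi : forall s, F s -> V.
Hypothesis chiM : forall s (a b : F s), chi (gmul a b) = chi a + chi b.
Hypothesis chi_emb : forall s m, chi (zf_emb m : F s) = 0.

Lemma chi1 s : chi (gone : F s) = 0.
Proof. by rewrite -(zf_emb0 (F s)) chi_emb. Qed.

Definition weight (u : syllable) : V := let: Syl s t := u in chi (zf_val t).

Definition char_word (w : word) : V := \sum_(u <- w.2) weight u.

Lemma char_act s (y : F s) w : char_word (act y w) = chi y + char_word w.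
Proof.
have char_push d L :
    char_word (push (zf_dec d) L) = chi d + \sum_(u <- L) weight u.
  rewrite /push /char_word /= [in chi d](zf_decK d) chiM chi_emb add0r.
  by case: is_tr1P => [->|_]; rewrite ?big_cons // zf_val1 chi1 add0r.
have char_head :
    chi (head s w).1 + \sum_(u <- (head s w).2) weight u = char_word w.
  case: w => m [|u L]; rewrite /head /char_word /= ?chi_emb ?add0r //.
  case e: (proj s u) => [t|]; rewrite /= ?chi_emb ?add0r //.
  by rewrite (proj_some e) big_cons chiM chi_emb add0r.
by rewrite /act char_push chiM -addrA char_head.
Qed.

Lemma char_ev u v : char_word (ev u v) = char_word u + char_word v.
Proof.
have char_ev_list L :
    char_word (ev_list L v) = \sum_(x <- L) weight x + char_word v.
  elim: L => [|[s t] L IH]; first by rewrite big_nil add0r.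
  by rewrite [ev_list _ _]/= char_act IH big_cons addrA.
exact: char_ev_list.
Qed.

Definition char (g : amalgam) : V := char_word (sval g).

Lemma charM a b : char (gmul a b) = char a + char b.
Proof. exact: char_ev. Qed.

Lemma char_conj c g : char (gmul c (gmul g (ginv c))) = char g.
Proof.
have charV : char (ginv c) = - char c.
  by apply/eqP; rewrite -addr_eq0 -charM gmulVl /char /char_word big_nil.
by rewrite !charM charV addrC -addrA addNr addr0.
Qed.

Lemma char_inj s (y : F s) : char (inj y) = chi y.
Proof. by rewrite /char char_act /char_word big_nil addr0. Qed.

Lemma inj_trivial s (y : F s) : inj y = gone -> y = gone.
Proof.
move=> /(f_equal sval) /=; rewrite /act /head /= zf_emb0 gmul1r /push.
by case: is_tr1P => [e|] //= [e1]; rewrite (zf_decK y) e1 e zf_val1 zf_emb0 gmul1r.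
Qed.

Lemma inj_single s m t : reduced [:: Syl s t] ->
  sval (inj (gmul (zf_emb m) (zf_val t) : F s)) = (m, [:: Syl s t]).
Proof.
move=> [/= nt _ _]; rewrite /act /head /= zf_emb0 gmul1r zf_dec_emb zf_dec_val.
by rewrite addr0 /push /=; case: is_tr1P.
Qed.

Hypothesis chi_torsion :
  forall s (y : F s) n, (0 < n)%N -> gpow y n = gone -> chi y = 0.

(* Torsion elements of the amalgam are killed by [char]: conjugating
   shortens a torsion element until it is a single syllable, i.e. lies in a
   factor. *)
Theorem char_torsion (g : amalgam) n : (0 < n)%N -> gpow g n = gone -> char g = 0.
Proof.
move=> n0; have [N] := ubnP (size (sval g).2); elim: N g => // N IH g hN hg.
case eg: (sval g) => [m [|u L]]; first by rewrite /char eg /char_word big_nil.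
case: (lastP L) eg => [|L1 u'] eg.
  case: u eg => s t eg.
  have ht : reduced [:: Syl s t] by have := proj2_sig g; rewrite eg.
  have gi : g = inj (gmul (zf_emb m) (zf_val t)).
    by apply: amalgam_eq; rewrite eg inj_single.
  rewrite gi char_inj; apply: (chi_torsion n0); apply: inj_trivial.
  by rewrite (homX (@inj_hom s)) -gi.
have [same|diff] := boolP (side u == side u').
  have [c hc] : exists c : amalgam,
      (size (sval (gmul c (gmul g (ginv c)))).2 < size (sval g).2)%N.
    move: eg; rewrite -cats1; case: u u' same => s a [s' b] /eqP /= e; subst s'.
    exact: conj_shorten.
  rewrite -(char_conj c); apply: IH; last by rewrite gpow_conj hg gmul1l gmulVr.
  by rewrite -ltnS; apply: leq_trans hN.
by case: (cyclically_reduced_aperiodic eg _ n0 hg); rewrite last_rcons; apply/eqP.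
Qed.
End AmalgamCharacter.
End Amalgam.

(* Every group with an infinite cyclic subgroup is a zfactor: a transversal
   is obtained by choosing a representative in each right coset. *)
Section ChosenTransversal.
Variables (K : AbsGroup) (emb : int -> K).
Hypothesis embD : forall m n, emb (m + n) = gmul (emb m) (emb n).
Hypothesis emb_trivial : forall m, emb m = gone -> m = 0.

Lemma emb0 : emb 0 = gone.
Proof. by apply: (@gmul_cancl _ (emb 0)); rewrite -embD addr0 gmul1r. Qed.

Lemma emb_inj m n : emb m = emb n -> m = n.
Proof.
move=> e; suff /emb_trivial : emb (m - n) = gone by lia.
by apply: (@gmul_cancl _ (emb n)); rewrite -embD addrC subrK e gmul1r.
Qed.

Definition coset (d : K) : K -> Prop := fun r => exists m, r = gmul (emb m) d.
Definition in_emb (d : K) : Prop := exists m, d = emb m.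

(* The chosen representative of the coset of [d]; the coset of the identity
   is represented by the identity itself. *)
Definition rep (d : K) : K :=
  if excluded_middle_informative (in_emb d) then gone
  else epsilon (inhabits d) (coset d).

Lemma coset_emb m d : coset (gmul (emb m) d) = coset d.
Proof.
apply: functional_extensionality => r; apply: propositional_extensionality.
split=> -[m' e]; first by exists (m' + m); rewrite e embD gmulA.
by exists (m' - m); rewrite e gmulA -embD subrK.
Qed.

Lemma in_emb_emb m d : in_emb (gmul (emb m) d) <-> in_emb d.
Proof.
split=> -[m' e]; last by exists (m + m'); rewrite e embD.
by exists (m' - m); apply: (@gmul_cancl _ (emb m)); rewrite e -embD addrC subrK.
Qed.

Lemma rep_emb m d : rep (gmul (emb m) d) = rep d.
Proof.
rewrite /rep coset_emb.
case: excluded_middle_informative => h1; case: excluded_middle_informative => h2 //.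
- by case: h2; apply/(in_emb_emb m).
- by case: h1; apply/(in_emb_emb m).
- by rewrite (proof_irrelevance _ (inhabits (gmul (emb m) d)) (inhabits d)).
Qed.

Lemma rep_coset d : coset d (rep d).
Proof.
rewrite /rep; case: excluded_middle_informative => [[m e]|_] /=.
  by exists (- m); rewrite {1}e -embD addNr emb0.
by apply: epsilon_spec; exists d, 0; rewrite emb0 gmul1l.
Qed.

Lemma rep_rep d : rep (rep d) = rep d.
Proof. by have [m {1}->] := rep_coset d; rewrite rep_emb. Qed.

Lemma rep1 : rep gone = gone.
Proof.
rewrite /rep; case: excluded_middle_informative => // - [].
by exists 0; rewrite emb0.
Qed.

Definition expo (d : K) : int :=
  epsilon (inhabits 0) (fun m => d = gmul (emb m) (rep d)).

Lemma expoK d : d = gmul (emb (expo d)) (rep d).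
Proof.
apply: (epsilon_spec (inhabits 0) (fun m => d = gmul (emb m) (rep d))).
have [m e] := rep_coset d.
by exists (- m); rewrite e gmulA -embD addNr emb0 gmul1l.
Qed.

Lemma expo_uniq d m : d = gmul (emb m) (rep d) -> expo d = m.
Proof.
by move=> e; apply/emb_inj/(@gmul_cancr _ (rep d)); rewrite -expoK.
Qed.

Definition reps := {r : K | rep r = r}.

Lemma reps_eq (r1 r2 : reps) : sval r1 = sval r2 -> r1 = r2.
Proof.
by case: r1 r2 => x hx [y hy] /= e; subst y; congr exist; apply: proof_irrelevance.
Qed.

Definition rep_one : reps := exist _ gone rep1.

Definition decomp (d : K) : int * reps := (expo d, exist _ (rep d) (rep_rep d)).

Lemma decompK d : d = gmul (emb (decomp d).1) (sval (decomp d).2).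
Proof. exact: expoK. Qed.

Lemma decomp_emb m d : decomp (gmul (emb m) d) = (m + (decomp d).1, (decomp d).2).
Proof.
rewrite /decomp /=; congr pair; last by apply: reps_eq; apply: rep_emb.
by apply: expo_uniq; rewrite rep_emb embD -gmulA -expoK.
Qed.

Lemma decomp_val t : decomp (sval t) = (0, t).
Proof.
rewrite /decomp; congr pair; last by apply: reps_eq; apply: (proj2_sig t).
by apply: expo_uniq; rewrite emb0 gmul1l (proj2_sig t).
Qed.

Definition zfactor_of : zfactor :=
  @ZFactor K emb embD reps rep_one (@sval K _) (erefl _)
    decomp decompK decomp_emb decomp_val.
End ChosenTransversal.

Definition int_group : AbsGroup :=
  @Build_AbsGroup int (fun a b => a + b) 0 (fun a => - a)
    (fun a b c => addrA a b c) (@add0r _) (@addr0 _) (@addNr _) (@addrN _).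

Lemma gpow_int (y : int_group) n : gpow y n = (y : int) *+ n.
Proof. by elim: n => [|n IH] //=; rewrite IH mulrS. Qed.

Section MultiplesFactor.
Variables (l : nat) (hl : (1 < l)%N).

Definition mult_emb (m : int) : int_group := m * (l : int).

Lemma mult_embD m n : mult_emb (m + n) = gmul (mult_emb m) (mult_emb n).
Proof. by rewrite /mult_emb /= mulrDl. Qed.

Lemma mult_emb_trivial m : mult_emb m = gone -> m = 0.
Proof.
by rewrite /mult_emb /= => /eqP; rewrite mulf_eq0 => /orP [/eqP //|]; lia.
Qed.

Definition mult_factor : zfactor := zfactor_of mult_embD mult_emb_trivial.

Definition mod_char (t : mult_factor) : 'Z_l := (t : int)%:~R.

Lemma mod_charM a b : mod_char (gmul a b) = mod_char a + mod_char b.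
Proof. by rewrite /mod_char /= intrD. Qed.

Lemma mod_char_emb m : mod_char (zf_emb m) = 0.
Proof.
rewrite /mod_char /= /mult_emb intrM -[((l : int)%:~R : 'Z_l)]/(l%:R).
by rewrite pchar_Zp // mulr0.
Qed.

Lemma mod_char_torsion (y : mult_factor) n :
  (0 < n)%N -> gpow y n = gone -> mod_char y = 0.
Proof.
move=> n0; rewrite gpow_int /= => /eqP.
by rewrite mulrn_eq0 eqn0Ngt n0 /= => /eqP ->.
Qed.
End MultiplesFactor.

Record zperm := ZPerm {
  pf : int -> int; pg : int -> int; pfK : cancel pf pg; pgK : cancel pg pf }.

Lemma zperm_eq (p q : zperm) : (forall x, pf p x = pf q x) -> p = q.
Proof.
case: p q => f g fK gK [f' g' fK' gK'] /= e.
have ef : f = f' := functional_extensionality _ _ e; subst f'.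
have eg : g = g' by apply: functional_extensionality => x; rewrite -{1}(gK' x) fK.
by subst g'; congr ZPerm; apply: proof_irrelevance.
Qed.

Definition pmul (p q : zperm) : zperm :=
  ZPerm (can_comp (pfK p) (pfK q)) (can_comp (pgK q) (pgK p)).
Definition pone : zperm := @ZPerm id id (fun _ => erefl) (fun _ => erefl).
Definition pinv (p : zperm) : zperm := ZPerm (pgK p) (pfK p).

Lemma pmulA a b c : pmul a (pmul b c) = pmul (pmul a b) c.
Proof. exact: zperm_eq. Qed.
Lemma pmul1l a : pmul pone a = a.
Proof. exact: zperm_eq. Qed.
Lemma pmul1r a : pmul a pone = a.
Proof. exact: zperm_eq. Qed.
Lemma pmulVl a : pmul (pinv a) a = pone.
Proof. by apply: zperm_eq => x /=; apply: pfK. Qed.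
Lemma pmulVr a : pmul a (pinv a) = pone.
Proof. by apply: zperm_eq => x /=; apply: pgK. Qed.

Definition zperm_group : AbsGroup :=
  Build_AbsGroup pmulA pmul1l pmul1r pmulVl pmulVr.

Lemma gpow_pf (p : zperm_group) n x : pf (gpow p n) x = iter n (pf p) x.
Proof. by elim: n x => [|n IH] x //=; rewrite IH. Qed.

Lemma divz_block (q r p : int) : 0 < p -> 0 <= r < p ->
  ((q * p + r) %/ p)%Z = q /\ ((q * p + r) %% p)%Z = r.
Proof.
move=> p0 hr; split; last by rewrite modzMDl modz_small.
by rewrite divzMDl ?gt_eqF // divz_small ?addr0 // gtz0_abs.
Qed.

(* The permutation of [Z] which, in every block [o + q * p + [0, m)] of a
   [p]-periodic pattern, cycles the [m] points of the block, and fixes all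
   other points.  It has order dividing [m]. *)
Section BlockRotation.
Variables (m : nat) (p o : int).
Hypotheses (m0 : (0 < m)%N) (mp : (m : int) <= p).

Definition rot (t : int) : int :=
  let u := t - o in
  if (u %% p)%Z < m then o + (u %/ p)%Z * p + (((u %% p)%Z + 1) %% m)%Z else t.

Lemma p_gt0 : 0 < p.
Proof. by apply: lt_le_trans mp; rewrite ltz_nat. Qed.

Lemma rot_block (q r : int) : 0 <= r < m ->
  rot (o + q * p + r) = o + q * p + ((r + 1) %% m)%Z.
Proof.
move=> /andP [r0 rm]; have rp : r < p by apply: lt_le_trans mp.
rewrite /rot (_ : o + q * p + r - o = q * p + r); last first.
  by rewrite addrAC [o + _]addrC addrK.
by have [-> ->] := divz_block q p_gt0 (introT andP (conj r0 rp)); rewrite rm.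
Qed.

Lemma rot_iter i t : iter i rot t =
  let u := t - o in
  if (u %% p)%Z < m then o + (u %/ p)%Z * p + (((u %% p)%Z + i%:Z) %% m)%Z else t.
Proof.
rewrite /=; set q := ((t - o) %/ p)%Z; set r := ((t - o) %% p)%Z.
have r0 : 0 <= r by rewrite modz_ge0 // gt_eqF // p_gt0.
case: ifP => hr; last by elim: i => [|i IH] //=; rewrite IH /rot hr.
elim: i => [|i IH] /=.
  by rewrite addr0 modz_small ?r0 // /q /r -addrA -divz_eq addrC subrK.
have ri : 0 <= ((r + i%:Z) %% m)%Z < m.
  have m0' : 0 < (m : int) by rewrite ltz_nat.
  by rewrite modz_ge0 ?ltz_pmod ?gt_eqF.
by rewrite IH rot_block // modzDml -[in r + i + 1]addrA -[i.+1]addn1 PoszD.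
Qed.

Lemma rot_order t : iter m rot t = t.
Proof.
rewrite rot_iter /=; case: ifP => // hr.
rewrite modzDr modz_small; last by rewrite hr modz_ge0 // gt_eqF // p_gt0.
by rewrite -addrA -divz_eq addrC subrK.
Qed.

Lemma rotK : cancel rot (iter m.-1 rot).
Proof. by move=> x; rewrite -iterSr prednK ?rot_order. Qed.

Lemma rot_predK : cancel (iter m.-1 rot) rot.
Proof. by move=> x; rewrite -iterS prednK ?rot_order. Qed.

Definition rot_perm : zperm := ZPerm rotK rot_predK.

Lemma rot_perm_order : gpow (rot_perm : zperm_group) m = gone.
Proof. by apply: zperm_eq => x; rewrite gpow_pf rot_order. Qed.
End BlockRotation.

(* Two rotations [a], [b] of orders [j], [k] whose product [a * b] is the
   infinite-order permutation sending the block boundaries [n * P] to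
   [(n - 1) * P], where [P = j + k - 2]. *)
Section TwoRotations.
Variables (j k : nat) (hj : (1 < j)%N) (hk : (1 < k)%N).

Definition period : int := (j : int) + (k : int) - 2.

Lemma j_gt0 : (0 < j)%N. Proof. lia. Qed.
Lemma k_gt0 : (0 < k)%N. Proof. lia. Qed.
Lemma j_le_period : (j : int) <= period. Proof. rewrite /period; lia. Qed.
Lemma k_le_period : (k : int) <= period. Proof. rewrite /period; lia. Qed.

Definition rot_a : zperm_group := rot_perm 0 j_gt0 j_le_period.
Definition rot_b : zperm_group := rot_perm ((j : int) - 1) k_gt0 k_le_period.
Definition rot_ab : zperm_group := gmul rot_a rot_b.

Lemma rot_ab_boundary (n : int) : pf rot_ab (n * period) = (n - 1) * period.
Proof.
have -> : n * period = (j : int) - 1 + (n - 1) * period + ((k : int) - 1).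
  by rewrite /period; ring.
rewrite /= (@rot_block _ _ _ k_gt0 k_le_period); last by apply/andP; split; lia.
have -> : (k : int) - 1 + 1 = k by ring.
rewrite modzz addr0.
have -> : (j : int) - 1 + (n - 1) * period
    = 0 + (n - 1) * period + ((j : int) - 1) by ring.
rewrite (@rot_block _ _ _ j_gt0 j_le_period); last by apply/andP; split; lia.
have -> : (j : int) - 1 + 1 = j by ring.
by rewrite modzz addr0 add0r.
Qed.

Lemma rot_ab_pow (n : nat) (x : int) :
  pf (gpow rot_ab n) (x * period) = (x - n%:Z) * period.
Proof.
elim: n x => [|n IH] x; first by rewrite /= subr0.
change (pf rot_ab (pf (gpow rot_ab n) (x * period)) = (x - n.+1%:Z) * period).
rewrite IH rot_ab_boundary.
by congr (_ * _); rewrite -addn1 PoszD; ring.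
Qed.

Lemma rot_ab_aperiodic (m : int) : zpow rot_ab m = gone -> m = 0.
Proof.
have P0 : period != 0 by rewrite /period; lia.
move=> /(f_equal (fun q : zperm_group => pf q 0)); case: m => [n|n] h.
  change (pf (gpow rot_ab n) 0 = 0) in h.
  have := rot_ab_pow n 0; rewrite mul0r h => /eqP.
  by rewrite eq_sym mulf_eq0 (negbTE P0) orbF add0r oppr_eq0 => /eqP ->.
change (pg (gpow rot_ab n.+1) 0 = 0) in h.
have e : pf (gpow rot_ab n.+1) (n.+1%:Z * period) = 0.
  by rewrite rot_ab_pow subrr mul0r.
have := pfK (gpow rot_ab n.+1) (n.+1%:Z * period); rewrite e h => /eqP.
by rewrite eq_sym mulf_eq0 (negbTE P0) orbF.
Qed.

Definition rot_factor : zfactor := zfactor_of (zpowD rot_ab) rot_ab_aperiodic.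
End TwoRotations.

Section TestGroup.
Variables (j k l : nat) (hj : (1 < j)%N) (hk : (1 < k)%N) (hl : (1 < l)%N).

Definition test_factor (s : bool) : zfactor :=
  if s then rot_factor hj hk else mult_factor hl.

Definition test_group : AbsGroup := amalgam test_factor.

Definition test_chi (s : bool) : test_factor s -> 'Z_l :=
  if s as b return test_factor b -> 'Z_l then fun _ => 0 else @mod_char l hl.

Lemma test_chiM s (a b : test_factor s) :
  test_chi (gmul a b) = test_chi a + test_chi b.
Proof. by case: s a b => a b; rewrite /= ?addr0 ?mod_charM. Qed.

Lemma test_chi_emb s m : test_chi (zf_emb m : test_factor s) = 0.
Proof. by case: s => //=; apply: mod_char_emb. Qed.

Lemma test_chi_torsion s (y : test_factor s) n :
  (0 < n)%N -> gpow y n = gone -> test_chi y = 0.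
Proof. by case: s y => //= y; apply: mod_char_torsion. Qed.

Definition test_a : test_group := inj (rot_a hj hk : test_factor true).
Definition test_b : test_group := inj (rot_b hj hk : test_factor true).
Definition test_c : test_group := inj ((1 : int) : test_factor false).
Definition test_pi : test_group -> 'Z_l := char test_chi.

Lemma test_a_order : gpow test_a j = gone.
Proof.
by rewrite /test_a -(homX (@inj_hom _ true)) rot_perm_order (hom1 (@inj_hom _ true)).
Qed.

Lemma test_b_order : gpow test_b k = gone.
Proof.
by rewrite /test_b -(homX (@inj_hom _ true)) rot_perm_order (hom1 (@inj_hom _ true)).
Qed.

(* Both [a * b] and [c ^ l] are the generator of the amalgamated subgroup. *)
Lemma test_relation : gmul test_a test_b = gpow test_c l.
Proof.
apply: amalgam_eq; rewrite /test_a /test_b /test_c -(inj_hom (s := true)).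
rewrite -(homX (@inj_hom _ false)).
have -> : gmul (rot_a hj hk) (rot_b hj hk) = zf_emb 1 :> test_factor true.
  by rewrite -[RHS]/(gmul (rot_ab hj hk) gone) gmul1r.
have -> : gpow ((1 : int) : test_factor false) l = zf_emb 1.
  by rewrite gpow_int /= /mult_emb mul1r natz.
by rewrite !inj_emb.
Qed.

Lemma test_piM g h : test_pi (gmul g h) = test_pi g + test_pi h.
Proof. exact: charM test_chiM test_chi_emb g h. Qed.

Lemma test_pi_inj s (y : test_factor s) : test_pi (inj y) = test_chi y.
Proof. exact: (char_inj (@test_chiM) (@test_chi_emb) y). Qed.

Lemma test_pi_a : test_pi test_a = 0.
Proof. exact: test_pi_inj. Qed.

Lemma test_pi_b : test_pi test_b = 0.
Proof. exact: test_pi_inj. Qed.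

Lemma test_pi_c : test_pi test_c = 1.
Proof. exact: test_pi_inj. Qed.

Lemma test_pi_torsion g n : (0 < n)%N -> gpow g n = gone -> test_pi g = 0.
Proof. exact: char_torsion test_chiM test_chi_emb test_chi_torsion g n. Qed.
End TestGroup.

(* A character [f : G -> Z/l] with [x, y |-> 0], [z |-> 1] killing all torsion
   elements is obtained by composing the map [G -> H] given by the
   presentation with the character of the test group. *)
Lemma torsion_character (j k l : nat) (hj : (1 < j)%N) (hk : (1 < k)%N)
    (hl : (1 < l)%N) (G : AbsGroup) (x y z : G) :
  (forall (H : AbsGroup) (a b c : H),
      gpow a j = gone -> gpow b k = gone -> gmul a b = gpow c l ->
      exists f : G -> H, [/\ is_hom f, f x = a, f y = b & f z = c]) ->
  exists f : G -> 'Z_l,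
    [/\ forall a b, f (gmul a b) = f a + f b, f x = 0, f y = 0, f z = 1 &
        forall g n, (0 < n)%N -> gpow g n = gone -> f g = 0].
Proof.
move=> hup; have [psi [hpsi px py pz]] := hup _ _ _ _
  (test_a_order hj hk hl) (test_b_order hj hk hl) (test_relation hj hk hl).
exists (fun g => test_pi (psi g)); split.
- by move=> a b; rewrite hpsi test_piM.
- by rewrite px test_pi_a.
- by rewrite py test_pi_b.
- by rewrite pz test_pi_c.
move=> g n n0 hg; apply: (test_pi_torsion n0).
by rewrite -(homX hpsi) hg (hom1 hpsi).
Qed.

Section FirstTorsionSubgroup.
Variables (j k l : nat) (hj : (1 < j)%N) (hk : (1 < k)%N) (hl : (1 < l)%N).
Variables (G : AbsGroup) (x y z : G).
Hypotheses (hx : gpow x j = gone) (hy : gpow y k = gone).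
Hypothesis hz : gmul x y = gpow z l.
Hypothesis hgen : forall g, generated3 x y z g.
Variable f : G -> 'Z_l.
Hypotheses (fM : forall a b, f (gmul a b) = f a + f b) (fz : f z = 1).
Hypotheses (fx : f x = 0) (fy : f y = 0).
Hypothesis f_torsion : forall g n, (0 < n)%N -> gpow g n = gone -> f g = 0.

Local Notation congr1 := (congr_mod (@Tor G 1)).

Lemma Tor1_x : Tor 1 x.
Proof. by apply: Tor1_torsion hx; lia. Qed.

Lemma Tor1_y : Tor 1 y.
Proof. by apply: Tor1_torsion hy; lia. Qed.

Lemma Tor1_zl n : Tor 1 (gpow z (l * n)).
Proof.
rewrite gpowM -hz; apply: (normal_subgroupX _ (@Tor1_normal G)).
by case: (@Tor1_normal G) => _ hM _ _; apply: hM; [apply: Tor1_x | apply: Tor1_y].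
Qed.

Lemma congr1_zpow (g : G) : exists n : nat, congr1 g (gpow z n) /\ f g = n%:R.
Proof.
have hN := @Tor1_normal G.
apply: (@hgen g (fun g => exists n : nat, congr1 g (gpow z n) /\ f g = n%:R)).
- by exists 0%N; split; [apply: (congr_mod_refl hN) | rewrite (f1 fM)].
- move=> a b [na [ha fa]] [nb [hb fb]]; exists (na + nb)%N.
  by rewrite gpowD fM fa fb natrD; split=> //; apply: (congr_modM hN).
- move=> a [na [ha fa]]; exists ((l - 1) * na)%N.
  have lna : ((l - 1) * na + na = l * na)%N.
    by rewrite -{2}(mul1n na) -mulnDl subnK //; lia.
  split.
    apply: congr_mod_trans (congr_modV hN ha) _ => //.
    rewrite /congr_mod -ginvM -gpowD lna.
    by case: hN => _ _ hV _; apply: hV; apply: Tor1_zl.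
  apply/eqP; rewrite (fV fM) fa eq_sym -addr_eq0 -natrD lna.
  by rewrite natrM pchar_Zp // mul0r.
- exists 0%N; split; last by rewrite fx.
  by change (congr1 x gone); apply/congr_mod1; apply: Tor1_x.
- exists 0%N; split; last by rewrite fy.
  by change (congr1 y gone); apply/congr_mod1; apply: Tor1_y.
- by exists 1%N; split; [rewrite /= gmul1r; apply: (congr_mod_refl hN) | rewrite fz].
Qed.

Lemma ker_Tor1 (g : G) : f g = 0 -> Tor 1 g.
Proof.
move=> fg; have [n [hn fn]] := congr1_zpow g.
move: fn; rewrite fg => /esym /(f_equal (@nat_of_ord _)).
rewrite val_Zp_nat // => /= hmod.
have hzn : congr1 (gpow z n) gone.
  by apply/congr_mod1; rewrite (divn_eq n l) hmod addn0 mulnC; apply: Tor1_zl.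
by apply/congr_mod1; apply: (congr_mod_trans (@Tor1_normal G) hn hzn).
Qed.

Lemma ker_iff_Tor1 (g : G) : f g = 0 <-> Tor 1 g.
Proof. by split; [apply: ker_Tor1 | apply: Tor1_ker]. Qed.
End FirstTorsionSubgroup.

(* [G / Tor_1(G)] has exponent [l], hence [Tor_2(G) = G]. *)
Lemma Tor2_all (l : nat) (G : AbsGroup) (f : G -> 'Z_l) :
  (1 < l)%N -> (forall a b, f (gmul a b) = f a + f b) ->
  (forall g, f g = 0 -> Tor 1 g) -> forall g : G, Tor 2 g.
Proof.
move=> hl fM ker1 g; apply: normal_closure_sub; exists l; split; first by lia.
apply: ker1; rewrite (fX fM) -mulr_natr.
by rewrite -[l%:R]/(l%:R : 'Z_l) pchar_Zp // mulr0.
Qed.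

Theorem proposition4p1 (j k l : nat) (hj : (1 < j)%N) (hk : (1 < k)%N) (hl : (1 < l)%N)
    (G : AbsGroup) (x y z : G) (hG : is_presentation x y z j k l) :
  (exists f : G -> 'Z_l,
      [/\ (forall a b : G, f (gmul a b) = f a + f b),
          (forall c : 'Z_l, exists g : G, f g = c) &
          (forall g : G, f g = 0 <-> Tor 1 g)])
  /\ TorLen_eq G 2.
Proof.
case: hG => hx hy hz hgen hup.
have [f [fM fx fy fz f_torsion]] := torsion_character hj hk hl hup.
have ker1 := ker_iff_Tor1 hj hk hl hx hy hz hgen fM fz fx fy f_torsion.
have Tor2 := Tor2_all hl fM (fun g => proj1 (ker1 g)).
have z_Tor_inf : Tor_inf z by exists 2%N; apply: Tor2.
split.
  exists f; split=> // c; exists (gpow z c).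
  by rewrite (fX fM) fz natr_Zp.
split=> [g|]; first by split=> [_|_]; [exists 2%N | apply: Tor2].
case=> [|[|m]] // _ hall; have := proj2 (hall z) z_Tor_inf.
  by move=> /= z1; move: fz; rewrite z1 (f1 fM) => /eqP; rewrite eq_sym oner_eq0.
by move=> /ker1; rewrite fz => /eqP; rewrite oner_eq0.
Qed.
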